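(* In the idealized setting described in the context, for the PAIR framework one has $\ell_k\ge 2\ell_{k-1}$ for every iteration $k\ge 1$.
   Context: Setting: a goal-conditioned Markov decision process with finite state space $\mathcal S$, finite action set $\mathcal A$, deterministic transitions, goal space $\mathcal G=\mathcal S$, and sparse reward $r(s,a,g)=\mathbb I\{s=g\}$. A policy is $\pi(a|s,g)$. Write $s\xrightarrow{\pi} g$ if, starting at $s_0=s$ and choosing $a_i\sim\pi(\cdot|s_i,g)$, $s_{i+1}\sim P(\cdot|s_i,a_i)$, the goal $g$ is reached ($s_t=g$ for some $t\ge 0$) with probability $1$. Let $d(s,s')$ be the minimum $t$ such that some policy reaches $s_t=s'$ from $s_0=s$ with probability $1$ ($+\infty$ if none). Let $\pi^{(k)}$ be the policy at the end of iteration $k$ ($\pi^{(0)}$ the initial policy) and $\ell_k=\sup\{\ell:\ s\xrightarrow{\pi^{(k)}} g \text{ for all } s,g \text{ with } d(s,g)\le \ell\}$. Assumptions: if $P(s'|s,a)=1$ then $\pi^{(0)}(a|s,g=s')=1$. In each iteration every state-goal pair $(s,g)$ is sampled at least once. Idealized PAIR iteration $k$: for each pair $(s,g)$, roll out $\pi^{(k-1)}$ from $s$ toward $g$; if it succeeds the trajectory is added to the dataset; otherwise task reduction selects a subgoal $s'$ maximizing $V(s,s')\cdot V(s',g)$, where $V$ is the goal-conditioned value function (equal to $1$ exactly on pairs $(x,y)$ with $x\xrightarrow{\pi^{(k-1)}}y$), executes $\pi^{(k-1)}(\cdot|\cdot,s')$ from $s$ and then $\pi^{(k-1)}(\cdot|\cdot,g)$,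 and adds the resulting successful trajectory from $s$ to $g$ if any. The supervised learning step then produces $\pi^{(k)}$ with $s\xrightarrow{\pi^{(k)}}g$ for every pair $(s,g)$ for which the dataset contains a successful trajectory from $s$ to $g$. *)

From HB Require Import structures.
From mathcomp Require Import all_boot all_order all_algebra.
From mathcomp Require Import all_classical all_reals all_analysis.
Set Implicit Arguments. Unset Strict Implicit. Unset Printing Implicit Defensive.
Import Order.TTheory GRing.Theory Num.Theory.
Import numFieldNormedType.Exports.
Local Open Scope classical_set_scope.
Local Open Scope ring_scope.

Section PAIR.
Variables (R : realType) (S A : finType).
(* deterministic transitions: P(T s a | s, a) = 1 *)
Variable T : S -> A -> S.

(* A goal-conditioned policy: pi s g a = pi(a | s, g). *)
Definition policy := S -> S -> A -> R.

Definition is_policy (pi : policy) : Prop :=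
  (forall s g a, 0 <= pi s g a) /\ (forall s g, \sum_(a : A) pi s g a = 1).

Fixpoint prob_at (pi : policy) (g : S) (t : nat) (s y : S) : R :=
  match t with
  | 0 => if s == y then 1 else 0
  | t'.+1 => \sum_(a : A) pi s g a * prob_at pi g t' (T s a) y
  end.

Fixpoint hit_prob (pi : policy) (g : S) (t : nat) (s : S) : R :=
  match t with
  | 0 => if s == g then 1 else 0
  | t'.+1 => if s == g then 1
             else \sum_(a : A) pi s g a * hit_prob pi g t' (T s a)
  end.

(* s --pi--> g : g is reached (s_t = g for some t >= 0) with probability 1.
   The probability of the (increasing union) event is the limit of the
   probabilities of reaching within t steps. *)
Definition reaches (pi : policy) (s g : S) : Prop :=
  (fun t => hit_prob pi g t s) @ \oo --> (1 : R).

(* d(s, s') <= l, where d(s,s') is the minimum t such that some policy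
   reaches s_t = s' from s_0 = s with probability 1 (+oo if none). *)
Definition dist_le (s s' : S) (l : nat) : Prop :=
  exists t : nat, (t <= l)%N /\
    exists pi : policy, is_policy pi /\ prob_at pi s' t s s' = 1.

Definition solves_upto (pi : policy) (l : nat) : Prop :=
  forall s g, dist_le s g l -> reaches pi s g.

Definition ell (pi : policy) : \bar R :=
  ereal_sup [set (l%:R)%:E | l in [set l : nat | solves_upto pi l]].

(* For each sampled pair (s,g) (every pair is sampled at least once; we record
   the outcome of one sample per pair, further samples can only add data):
   - roll_ok s g : the rollout of pi_prev from s toward g succeeded;
   - sub s g     : the subgoal chosen by task reduction;
   - leg_ok s g  : the execution pi_prev(.|.,sub) from s then pi_prev(.|.,g)
                   produced a successful trajectory from s to g;
   - D s g       : the dataset contains a successful trajectory from s to g.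
   Idealization: an execution that succeeds with probability 1 succeeds. *)
Definition PAIR_iteration (pi_prev pi_next : policy) : Prop :=
  exists (V : S -> S -> R) (roll_ok : S -> S -> bool) (sub : S -> S -> S)
         (leg_ok : S -> S -> bool) (D : S -> S -> bool),
    (* V is the goal-conditioned value function of pi_prev *)
    (forall x y, 0 <= V x y <= 1) /\
    (forall x y, V x y = 1 <-> reaches pi_prev x y) /\
    (forall s g, reaches pi_prev s g -> roll_ok s g) /\
    (forall s g, roll_ok s g -> D s g) /\
    (forall s g, ~~ roll_ok s g ->
       (forall s', V s s' * V s' g <= V s (sub s g) * V (sub s g) g) /\
       (reaches pi_prev s (sub s g) -> reaches pi_prev (sub s g) g ->
          leg_ok s g) /\
       (leg_ok s g -> D s g)) /\
    is_policy pi_next /\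
    (forall s g, D s g -> reaches pi_next s g).

End PAIR.

From HB Require Import structures.
From mathcomp Require Import all_boot all_order all_algebra.
From mathcomp Require Import all_classical all_reals all_analysis.
From mathcomp Require Import lra zify.
Set Implicit Arguments. Unset Strict Implicit. Unset Printing Implicit Defensive.
Import Order.TTheory GRing.Theory Num.Theory.
Local Open Scope ring_scope.

(* If d(s, g) <= 2l, the law of the state reached halfway along an optimal
   rollout is supported on states z with d(s, z) <= l (transitions are
   deterministic, so positive probability yields a path, hence a shortest-path
   policy), and almost all of its mass satisfies d(z, g) <= l.  Such a z is
   solved on both sides by pi_(k-1), so V(s, z) V(z, g) = 1; task reduction
   maximizes this product over [0, 1], so its subgoal also splits (s, g) into
   two solved pairs and the two-leg execution puts (s, g) into the dataset. *)

Lemma weighted_mean_eq1 (R : realDomainType) (I : finType) (w v : I -> R) :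
  (forall i, 0 <= w i) -> \sum_i w i = 1 -> (forall i, v i <= 1) ->
  \sum_i w i * v i = 1 -> exists2 i, w i != 0 & v i = 1.
Proof.
move=> w_ge0 w_sum1 v_le1 wv_sum1.
have gap_ge0 i : 0 <= w i * (1 - v i) by rewrite mulr_ge0 // subr_ge0.
have /psumr_eq0P gap0 : \sum_i w i * (1 - v i) = 0.
  by under eq_bigr do rewrite mulrBr mulr1; rewrite sumrB w_sum1 wv_sum1 subrr.
have /(psumr_neq0P (fun i _ => w_ge0 i))[i /andP[_ wi_gt0]] : \sum_i w i <> 0.
  by rewrite w_sum1; exact/eqP/oner_neq0.
exists i; first by rewrite lt0r_neq0.
apply/eqP; rewrite eq_sym -subr_eq0.
by have /eqP := gap0 (fun j _ => gap_ge0 j) i isT; rewrite mulf_eq0 gt_eqF.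
Qed.

Lemma unit_interval_mul_ge1 (R : realDomainType) (x y : R) :
  0 <= x <= 1 -> 0 <= y <= 1 -> 1 <= x * y -> x = 1 /\ y = 1.
Proof.
move=> /andP[? ?] /andP[? ?] ?.
by split; apply: le_anti; apply/andP; split; nra.
Qed.

Lemma sum_if_eq (R : nmodType) (I : finType) (i : I) (F : I -> R) :
  \sum_j (if i == j then F j else 0) = F i.
Proof.
by rewrite -big_mkcond /= (big_pred1 i) // => j; rewrite eq_sym.
Qed.

Section Rollouts.
Variables (R : realType) (S A : finType) (T : S -> A -> S).
Implicit Types (pi prev next : policy R S A) (s g x y z : S) (t : nat).

Lemma is_policy_card_gt0 pi s : is_policy pi -> (0 < #|A|)%N.
Proof.
case=> _ /(_ s s); rewrite lt0n; apply: contra_eqN => /eqP/card0_eq A0.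
by rewrite big_pred0 // eq_sym oner_eq0.
Qed.

Lemma prob_atD pi g t1 t2 s y :
  prob_at T pi g (t1 + t2) s y =
  \sum_z prob_at T pi g t1 s z * prob_at T pi g t2 z y.
Proof.
elim: t1 s => [|t1 IH] s /=.
  by under eq_bigr do rewrite (fun_if (GRing.mul^~ _)) mul1r mul0r; rewrite sum_if_eq.
under eq_bigr do rewrite IH mulr_sumr; rewrite exchange_big /=.
by apply: eq_bigr => z _; rewrite mulr_suml; under eq_bigr do rewrite mulrA.
Qed.

Section Policy.
Variable pi : policy R S A.
Hypothesis pi_policy : is_policy pi.

Lemma prob_at_ge0 g t s y : 0 <= prob_at T pi g t s y.
Proof.
have [pi_ge0 _] := pi_policy.
elim: t s => [|t IH] s /=; first by case: ifP.
by apply: sumr_ge0 => a _; rewrite mulr_ge0.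
Qed.

Lemma prob_at_sum1 g t s : \sum_z prob_at T pi g t s z = 1.
Proof.
have [_ pi_sum1] := pi_policy.
elim: t s => [|t IH] s /=; first by rewrite sum_if_eq.
by rewrite exchange_big /= -(pi_sum1 s g); apply: eq_bigr => a _; rewrite -mulr_sumr IH mulr1.
Qed.

Lemma prob_at_le1 g t s y : prob_at T pi g t s y <= 1.
Proof.
rewrite -(prob_at_sum1 g t s) (bigD1 y) //= lerDl.
by apply: sumr_ge0 => z _; apply: prob_at_ge0.
Qed.

End Policy.

Fixpoint reach_in t x y : bool :=
  if t is t'.+1 then [exists a, reach_in t' (T x a) y] else x == y.

Lemma prob_at_reach_in pi g t s y : prob_at T pi g t s y != 0 -> reach_in t s y.
Proof.
elim: t s => [|t IH] s /=; first by case: (s =P y) => // _; rewrite eqxx.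
apply: contraNT => /existsPn unreachable; apply/eqP/big1 => a _.
by have [->|/IH] := eqVneq (prob_at T pi g t (T s a) y) 0;
  [rewrite mulr0 | rewrite (negbTE (unreachable a))].
Qed.

(* Number of steps of a shortest path from x to y; junk value 0 if there is none. *)
Definition hop_dist x y : nat :=
  if pselect (exists t, reach_in t x y) is left ex then ex_minn ex else 0%N.

Lemma hop_distP t x y :
  reach_in t x y -> reach_in (hop_dist x y) x y /\ (hop_dist x y <= t)%N.
Proof.
move=> xy; rewrite /hop_dist; case: pselect => [ex|[]]; last by exists t.
by case: ex_minnP => d xy_d d_min; split; last exact: d_min.
Qed.

Lemma hop_dist_next t x y a :
  hop_dist x y = t.+1 -> reach_in t (T x a) y -> hop_dist (T x a) y = t.
Proof.
move=> dxy xay; have [xay_d le_t] := hop_distP xay.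
have /hop_distP[_] : reach_in (hop_dist (T x a) y).+1 x y.
  by apply/existsP; exists a.
rewrite dxy ltnS => ge_t.
by apply/eqP; rewrite eqn_leq le_t ge_t.
Qed.

Section Greedy.
Variable a0 : A.

Definition greedy_action x y : A :=
  odflt a0 [pick a | reach_in (hop_dist x y).-1 (T x a) y].

Definition greedy : policy R S A := fun x y a => (a == greedy_action x y)%:R.

Lemma greedy_policy : is_policy greedy.
Proof.
split=> [x y a|x y]; first exact: ler0n.
by rewrite (bigD1 (greedy_action x y)) //= /greedy eqxx big1 ?addr0 // => a /negbTE ->.
Qed.

Lemma greedy_reaches t x y :
  hop_dist x y = t -> reach_in t x y -> prob_at T greedy y t x y = 1.
Proof.
elim: t x => [|t IH] x /= dxy; first by move/eqP ->; rewrite eqxx.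
move=> /existsP[a xay].
have next_ok : reach_in t (T x (greedy_action x y)) y.
  by rewrite /greedy_action dxy /=; case: pickP => [//|/(_ a)]; rewrite xay.
rewrite (bigD1 (greedy_action x y)) //= {1}/greedy eqxx mul1r big1 ?addr0.
  exact: IH (hop_dist_next dxy next_ok) next_ok.
by move=> b; rewrite /greedy => /negbTE ->; rewrite mul0r.
Qed.

Lemma reach_in_dist_le t l x y :
  (t <= l)%N -> reach_in t x y -> dist_le R T x y l.
Proof.
move=> le_tl xy; have [xy_d le_dt] := hop_distP xy.
exists (hop_dist x y); split; first exact: leq_trans le_dt le_tl.
by exists greedy; split; [exact: greedy_policy | exact: greedy_reaches erefl xy_d].
Qed.

End Greedy.

Lemma dist_le_double_split l s g :
  dist_le R T s g (l + l) -> exists z, dist_le R T s z l /\ dist_le R T z g l.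
Proof.
move=> [t [le_t [pi [pi_policy reach_g]]]].
have /card_gt0P[a0 _] := is_policy_card_gt0 s pi_policy.
pose t1 := minn t l; pose t2 := (t - t1)%N.
have le_t1 : (t1 <= l)%N by apply: geq_minr.
have le_t2 : (t2 <= l)%N by rewrite /t2 /t1; lia.
move: reach_g; rewrite -(subnKC (geq_minl t l)) -/t1 -/t2 prob_atD => mean1.
have [z s_z z_g] := weighted_mean_eq1 (prob_at_ge0 pi_policy g t1 s)
  (prob_at_sum1 pi_policy g t1 s) (fun z => prob_at_le1 pi_policy g t2 z g) mean1.
exists z; split; first exact: (reach_in_dist_le a0 le_t1 (prob_at_reach_in s_z)).
by exists t2; split => //; exists pi.
Qed.

Lemma PAIR_iteration_solves_double prev next l :
  PAIR_iteration T prev next -> solves_upto T prev l -> solves_upto T next (l + l).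
Proof.
move=> [V [roll_ok [sub [leg_ok [D [V01 [V1 [_ [roll_D [reduce
  [_ D_reaches]]]]]]]]]]] solved s g /dist_le_double_split[z [s_z z_g]].
apply: D_reaches; have [/roll_D //|failed] := boolP (roll_ok s g).
have [sub_max [legs_ok leg_D]] := reduce s g failed.
have [V_s_sub V_sub_g] : V s (sub s g) = 1 /\ V (sub s g) g = 1.
  apply: unit_interval_mul_ge1 (V01 _ _) (V01 _ _) _.
  have V_sz : V s z = 1 by apply/V1/solved.
  have V_zg : V z g = 1 by apply/V1/solved.
  by have := sub_max z; rewrite V_sz V_zg mulr1.
by apply/leg_D/legs_ok; apply/V1.
Qed.

Lemma ell_double pi pi' :
  (forall l, solves_upto T pi l -> solves_upto T pi' (l + l)) ->
  (2%:E * ell T pi <= ell T pi')%E.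
Proof.
move=> double; rewrite /ell -ereal_sup_pZl //.
apply: ereal_sup_le => _ [_ [l solved <-] <-].
by exists (l + l)%N; [exact: double | rewrite -EFinM natrD mulr_natl mulr2n].
Qed.

End Rollouts.

Theorem lemmaA1 (R : realType) (S A : finType) (T : S -> A -> S)
  (pis : nat -> policy R S A)
  (Hpol : forall k, is_policy (pis k))
  (Hinit : forall s a, pis 0%N s (T s a) a = 1)
  (Hiter : forall k, (0 < k)%N -> PAIR_iteration T (pis k.-1) (pis k)) :
  forall k, (0 < k)%N -> (2%:E * ell T (pis k.-1) <= ell T (pis k))%E.
Proof.
move=> k k_gt0; apply: ell_double => l.
exact: PAIR_iteration_solves_double (Hiter k k_gt0).
Qed.
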